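(* Let $N\ge1$, $S_1,\dots,S_N\ge1$, and consider an $S_1\times\cdots\times S_N$-setting $N$-partite correlation experiment with joint distributions $P_s$ on $\Lambda_1^{(s_1)}\times\cdots\times\Lambda_N^{(s_N)}$ for $s=(s_1,\dots,s_N)$, admitting an LHV model. Then for any real coefficients $\gamma_s^{(q_s)}$ and any events $D_s^{(q_s)}\subseteq\Lambda_1^{(s_1)}\times\cdots\times\Lambda_N^{(s_N)}$, $q_s=1,\dots,Q_s$, observed under the joint measurement $s$, the tight linear LHV constraint $$\inf_{\lambda_1\in\Lambda_1,\dots,\lambda_N\in\Lambda_N}\sum_{q_s,\,s}\gamma_s^{(q_s)}\chi_{D_s^{(q_s)}}(\lambda_1^{(s_1)},\dots,\lambda_N^{(s_N)})\le\sum_{q_s,\,s}\gamma_s^{(q_s)}P_s(D_s^{(q_s)})\le\sup_{\lambda_1\in\Lambda_1,\dots,\lambda_N\in\Lambda_N}\sum_{q_s,\,s}\gamma_s^{(q_s)}\chi_{D_s^{(q_s)}}(\lambda_1^{(s_1)},\dots,\lambda_N^{(s_N)})$$ holds, where $\lambda_n=(\lambda_n^{(1)},\dots,\lambda_n^{(S_n)})$ and $\Lambda_n=\Lambda_n^{(1)}\times\cdots\times\Lambda_n^{(S_n)}$.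
   Context: Party $n$ performs measurements $s_n\in\{1,\dots,S_n\}$ with outcomes in a measurable space $\Lambda_n^{(s_n)}$. $\chi_D$ is the indicator function of $D$. The sum runs over all joint settings $s$ and all $q_s=1,\dots,Q_s$. The experiment admitting an LHV model is characterized by the existence of a probability measure on $\Lambda_1\times\cdots\times\Lambda_N$ having every $P_s$ as the marginal on coordinates $(\lambda_1^{(s_1)},\dots,\lambda_N^{(s_N)})$. A linear LHV constraint is tight if, within the class of experiments with the given outcome sets admitting an LHV model, its bounds cannot be improved. *)

From HB Require Import structures.
From mathcomp Require Import all_boot all_order all_algebra.
From mathcomp Require Import all_classical all_reals all_analysis.
Unset Printing Implicit Defensive.
Import Order.TTheory GRing.Theory Num.Theory.
Local Open Scope classical_set_scope.
Local Open Scope ring_scope.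

Definition dprod (I : Type) (d : I -> measure_display)
  (X : forall i, measurableType (d i)) : Type := forall i, X i.
Arguments dprod {I d} X.

Definition dprod_display : measure_display. Proof. exact: default_measure_display. Qed.

Section dprod_measurable.
Variables (I : Type) (d : I -> measure_display) (X : forall i, measurableType (d i)).

HB.instance Definition _ := gen_eqMixin (dprod X).
HB.instance Definition _ := gen_choiceMixin (dprod X).
HB.instance Definition _ := isPointed.Build (dprod X) (fun i => point).

Definition dprod_cylinders : set (set (dprod X)) :=
  [set B | exists i : I, exists2 A : set (X i),
     measurable A & B = (fun x : dprod X => x i) @^-1` A].

Definition dprod_measurable := <<s dprod_cylinders >>.

Let dprod_set0 : dprod_measurable set0.
Proof. exact: sigma_algebra0. Qed.
Let dprod_setC A : dprod_measurable A -> dprod_measurable (~` A).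
Proof. exact: sigma_algebraC. Qed.
Let dprod_bigcup (F : (set (dprod X))^nat) : (forall i, dprod_measurable (F i)) ->
  dprod_measurable (\bigcup_i (F i)).
Proof. exact: sigma_algebra_bigcup. Qed.

HB.instance Definition _ := @isMeasurable.Build dprod_display
  (dprod X) dprod_measurable dprod_set0 dprod_setC dprod_bigcup.
End dprod_measurable.

Section experiment.
Variables (R : realType) (N : nat) (S : 'I_N -> nat)
  (d : forall n : 'I_N, 'I_(S n) -> measure_display)
  (T : forall (n : 'I_N) (k : 'I_(S n)), measurableType (d n k)).

(** joint settings s = (s_1, ..., s_N), with s_n in {1..S_n} (0-based) *)
Definition setting := {dffun forall n : 'I_N, 'I_(S n)}.

Definition outcome (s : setting) := dprod (fun n => T n (s n)).

Definition party_space (n : 'I_N) := dprod (T n).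

Definition hidden_space := dprod party_space.

Definition proj_setting (s : setting) (l : hidden_space) : outcome s :=
  fun n => l n (s n).

(** The experiment (P_s)_s admits an LHV model: there is a probability
    measure on Lambda_1 x ... x Lambda_N whose marginal on the coordinates
    (lambda_1^(s_1), ..., lambda_N^(s_N)) is P_s, for every s. *)
Definition has_LHV_model (P : forall s : setting, probability (outcome s) R) :=
  exists mu : probability hidden_space R,
    forall (s : setting) (A : set (outcome s)), measurable A ->
      mu (proj_setting s @^-1` A) = P s A.

Variables (Q : setting -> nat) (gamma : forall s, 'I_(Q s) -> R)
  (D : forall s, 'I_(Q s) -> set (outcome s)).

Definition lhv_functional (l : hidden_space) : R :=
  \sum_(s : setting) \sum_(q < Q s) gamma s q * \1_(D s q) (proj_setting s l).

Definition experiment_value (P : forall s : setting, probability (outcome s) R) : R :=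
  \sum_(s : setting) \sum_(q < Q s) gamma s q * fine (P s (D s q)).

End experiment.

Arguments setting {N} S.
Arguments outcome {N S d} T s.
Arguments party_space {N S d} T n.
Arguments hidden_space {N S d} T.
Arguments proj_setting {N S d T} s l.
Arguments has_LHV_model {R N S d T} P.
Arguments lhv_functional {R N S d T Q} gamma D l.
Arguments experiment_value {R N S d T Q} gamma D P.

From HB Require Import structures.
From mathcomp Require Import all_boot all_order all_algebra.
From mathcomp Require Import all_classical all_reals all_analysis.
Import Order.TTheory GRing.Theory Num.Theory.
Local Open Scope classical_set_scope.
Local Open Scope ring_scope.

(* If mu is an LHV model of the experiment, then sum gamma P(D) is the
   mu-expectation of the bounded function l |-> sum gamma chi_D(proj l), so it
   lies between the infimum and the supremum of that function. Conversely,
   every value of the function is attained by the deterministic experiment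
   whose LHV model is the Dirac measure at l, which gives tightness. *)

Section bounded_range.
Context {R : realType} {T : pointedType} {f : T -> R} {M : R}.
Hypothesis f_bounded : forall x, `|f x| <= M.

Lemma bounded_range_has_sup : has_sup (range f).
Proof.
split; first by exists (f point), point.
by exists M => _ [x _ <-]; exact: le_trans (ler_norm _) (f_bounded x).
Qed.

Lemma bounded_range_has_inf : has_inf (range f).
Proof.
split; first by exists (f point), point.
by exists (- M) => _ [x _ <-]; have := f_bounded x; rewrite ler_norml => /andP[].
Qed.

End bounded_range.

Section probability_integral_bounds.
Local Open Scope ereal_scope.
Context {d : measure_display} {T : measurableType d} {R : realType}
  {mu : probability T R} {f : T -> R}.
Hypothesis f_int : mu.-integrable setT (EFin \o f).

Lemma integral_cst_probability (r : R) : \int[mu]_x (EFin \o cst r) x = r%:E.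
Proof.
by rewrite (_ : EFin \o cst r = cst r%:E) // integral_cst //= probability_setT mule1.
Qed.

Lemma integral_ge_lbound (a : R) : (forall x, (a <= f x)%R) ->
  a%:E <= \int[mu]_x (f x)%:E.
Proof.
move=> af; rewrite -integral_cst_probability.
apply: le_integral => //; first exact: finite_measure_integrable_cst.
by move=> x _; rewrite lee_fin.
Qed.

Lemma integral_le_ubound (b : R) : (forall x, (f x <= b)%R) ->
  \int[mu]_x (f x)%:E <= b%:E.
Proof.
move=> fb; rewrite -integral_cst_probability.
apply: le_integral => //; first exact: finite_measure_integrable_cst.
by move=> x _; rewrite lee_fin.
Qed.

Lemma integral_between_inf_sup : has_inf (range f) -> has_sup (range f) ->
  (inf (range f))%:E <= \int[mu]_x (f x)%:E <= (sup (range f))%:E.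
Proof.
move=> [_ hlb] hsup; apply/andP; split.
- by apply: integral_ge_lbound => x; apply: (ge_inf hlb); exists x.
- by apply: integral_le_ubound => x; apply: (sup_upper_bound hsup); exists x.
Qed.

End probability_integral_bounds.

Section lhv_functional.
Context {R : realType} {N : nat} {S : 'I_N -> nat}
  {d : forall n : 'I_N, 'I_(S n) -> measure_display}
  {T : forall (n : 'I_N) (k : 'I_(S n)), measurableType (d n k)}
  {Q : setting S -> nat}.
Variables (gamma : forall s : setting S, 'I_(Q s) -> R)
  (D : forall s : setting S, 'I_(Q s) -> set (outcome T s)).

Local Notation F := (lhv_functional gamma D).

Lemma measurable_proj_setting (s : setting S) :
  measurable_fun setT (@proj_setting _ _ _ T s).
Proof.
apply: (measurability (@dprod_cylinders _ _ (fun n => T n (s n)))) => //.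
move=> _ [_ [n [A mA ->]] <-]; apply: sub_sigma_algebra; exists n.
exists ((fun y : party_space T n => y (s n)) @^-1` A); last by rewrite setTI.
by apply: sub_sigma_algebra; exists (s n), A.
Qed.

Lemma measurable_proj_setting_preimage {s : setting S} {A : set (outcome T s)} :
  measurable A -> measurable (proj_setting s @^-1` A).
Proof. by move=> mA; have := measurable_proj_setting s measurableT _ mA; rewrite setTI. Qed.

Lemma normr_lhv_functional_le (l : hidden_space T) :
  `|F l| <= \sum_(s : setting S) \sum_(q < Q s) `|gamma s q|.
Proof.
apply: le_trans (ler_norm_sum _ _ _) _; apply: ler_sum => s _.
apply: le_trans (ler_norm_sum _ _ _) _; apply: ler_sum => q _.
by rewrite normrM indicE; case: (_ \in _); rewrite ?normr1 ?normr0 ?mulr1 ?mulr0.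
Qed.

Lemma has_sup_range_lhv_functional : has_sup (range F).
Proof. exact: bounded_range_has_sup normr_lhv_functional_le. Qed.

Lemma has_inf_range_lhv_functional : has_inf (range F).
Proof. exact: bounded_range_has_inf normr_lhv_functional_le. Qed.

Hypothesis mD : forall (s : setting S) (q : 'I_(Q s)), measurable (D s q).

Local Open Scope ereal_scope.

Lemma EFin_lhv_functionalE : EFin \o F = fun l =>
  \sum_(s : setting S) \sum_(q < Q s)
    (gamma s q)%:E * (\1_(proj_setting s @^-1` D s q) l)%:E.
Proof.
apply/funext => l /=; rewrite -sumEFin; apply: eq_bigr => s _.
by rewrite -sumEFin; apply: eq_bigr => q _; rewrite EFinM.
Qed.

Variable mu : probability (hidden_space T) R.

Let int_indic (s : setting S) (q : 'I_(Q s)) :=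
  integrable_indic mu (measurable_proj_setting_preimage (mD s q)).

Let int_term (s : setting S) (q : 'I_(Q s)) :=
  integrableZl measurableT (gamma s q) (int_indic s q).

Lemma integrable_lhv_functional : mu.-integrable setT (EFin \o F).
Proof.
rewrite EFin_lhv_functionalE.
apply: (integrable_sum measurableT) => s _.
by apply: (integrable_sum measurableT) => q _; exact: int_term.
Qed.

Lemma integral_lhv_functional {P : forall s : setting S, probability (outcome T s) R} :
  (forall (s : setting S) (A : set (outcome T s)), measurable A ->
     mu (proj_setting s @^-1` A) = P s A) ->
  \int[mu]_l (F l)%:E = (experiment_value gamma D P)%:E.
Proof.
move=> marginal; rewrite [X in integral _ _ X]EFin_lhv_functionalE.
rewrite integral_sum //=; last first.
  by move=> s; apply: (integrable_sum measurableT) => q _; exact: int_term.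
rewrite /experiment_value -sumEFin; apply: eq_bigr => s _.
rewrite integral_sum //= -sumEFin; apply: eq_bigr => q _.
rewrite (integralZl measurableT (int_indic s q)) integral_indic //; last first.
  exact: measurable_proj_setting_preimage (mD s q).
rewrite setIT EFinM fineK; last exact: fin_num_measure (mD s q).
by congr (_ * _); exact: marginal.
Qed.

End lhv_functional.

Section deterministic_experiment.
Context {R : realType} {N : nat} {S : 'I_N -> nat}
  {d : forall n : 'I_N, 'I_(S n) -> measure_display}
  {T : forall (n : 'I_N) (k : 'I_(S n)), measurableType (d n k)}.
Variable l : hidden_space T.

Definition dirac_experiment (s : setting S) : probability (outcome T s) R :=
  \d_(proj_setting s l).

Lemma has_LHV_model_dirac : has_LHV_model dirac_experiment.
Proof. by exists (\d_l : probability (hidden_space T) R). Qed.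

(* [\d_x A] unfolds to [\1_A x], so both sides agree term by term. *)
Lemma experiment_value_dirac {Q : setting S -> nat}
    (gamma : forall s : setting S, 'I_(Q s) -> R)
    (D : forall s : setting S, 'I_(Q s) -> set (outcome T s)) :
  experiment_value gamma D dirac_experiment = lhv_functional gamma D l.
Proof. by []. Qed.

End deterministic_experiment.

Theorem corollary4 (R : realType) (N : nat) (S : 'I_N -> nat)
  (d : forall n : 'I_N, 'I_(S n) -> measure_display)
  (T : forall (n : 'I_N) (k : 'I_(S n)), measurableType (d n k)) :
  (1 <= N)%N -> (forall n : 'I_N, (1 <= S n)%N) ->
  forall (P : forall s : setting S, probability (outcome T s) R),
  has_LHV_model P ->
  forall (Q : setting S -> nat) (gamma : forall s : setting S, 'I_(Q s) -> R)
    (D : forall s : setting S, 'I_(Q s) -> set (outcome T s)),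
  (forall (s : setting S) (q : 'I_(Q s)), measurable (D s q)) ->
  (* the linear LHV constraint *)
  (inf (range (lhv_functional gamma D)) <= experiment_value gamma D P
   <= sup (range (lhv_functional gamma D)))
  (* tightness of the upper bound: it cannot be lowered within the class of
     experiments with the same outcome spaces admitting an LHV model *)
  /\ (forall c : R, c < sup (range (lhv_functional gamma D)) ->
        exists P' : forall s : setting S, probability (outcome T s) R,
          has_LHV_model P' /\ c < experiment_value gamma D P')
  (* tightness of the lower bound *)
  /\ (forall c : R, inf (range (lhv_functional gamma D)) < c ->
        exists P' : forall s : setting S, probability (outcome T s) R,
          has_LHV_model P' /\ experiment_value gamma D P' < c).
Proof.
move=> _ _ P [mu marginal] Q gamma D mD.
have hsup := has_sup_range_lhv_functional gamma D.
have hinf := has_inf_range_lhv_functional gamma D.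
split; [|split].
- have := integral_between_inf_sup (integrable_lhv_functional gamma D mD mu) hinf hsup.
  by rewrite (integral_lhv_functional gamma D mD mu marginal) !lee_fin.
- move=> c; rewrite -subr_gt0 => /sup_adherent/(_ hsup)[_ [l _ <-]].
  rewrite opprB addrCA subrr addr0 => cF.
  by exists (dirac_experiment l); rewrite experiment_value_dirac; split => //;
    exact: has_LHV_model_dirac.
- move=> c; rewrite -subr_gt0 => /inf_adherent/(_ hinf)[_ [l _ <-]].
  rewrite addrCA subrr addr0 => Fc.
  by exists (dirac_experiment l); rewrite experiment_value_dirac; split => //;
    exact: has_LHV_model_dirac.
Qed.
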